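(* Let $k$ be an integer with $1 \le k \leq 3$. If a non-empty graph $T$ is a $\mathsf{TJ}_k$-graph and $T$ does not contain a diamond ($K_4$ minus one edge) as an induced subgraph, then $T$ is a maximum $\mathsf{TJ}_k$-graph.
   Context: Graphs are finite, simple, undirected; non-empty means having at least one vertex. $\mathsf{TJ}_k(G)$ is the graph on the cliques of $G$ of size $k$ where $C, C'$ are adjacent iff $|C \setminus C'| = |C' \setminus C| = 1$. $T$ is a $\mathsf{TJ}_k$-graph if $T \cong \mathsf{TJ}_k(G)$ for some graph $G$, and a maximum $\mathsf{TJ}_k$-graph if $T \cong \mathsf{TJ}_k(G)$ for some $G$ with $\omega(G) = k$ ($\omega$ = maximum clique size). *)

From mathcomp Require Import all_boot.
Set Implicit Arguments. Unset Strict Implicit. Unset Printing Implicit Defensive.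

Record sgraph := SGraph {
  vtx : finType;
  adj : rel vtx;
  adj_sym : symmetric adj;
  adj_irr : irreflexive adj }.

Definition is_clique (G : sgraph) (C : {set vtx G}) : bool :=
  [forall x in C, forall y in C, (x != y) ==> @adj G x y].

Definition tj_vertex (G : sgraph) (k : nat) : finType :=
  {C : {set vtx G} | is_clique C && (#|C| == k)}.

Definition tj_adj (G : sgraph) (k : nat) : rel (tj_vertex G k) :=
  fun C C' => (#|val C :\: val C'| == 1) && (#|val C' :\: val C| == 1).

Definition iso_TJ (k : nat) (T G : sgraph) : Prop :=
  exists f : vtx T -> tj_vertex G k,
    bijective f /\ forall x y, @adj T x y = tj_adj (f x) (f y).

Definition clique_number (G : sgraph) : nat :=
  \max_(C : {set vtx G} | is_clique C) #|C|.

Definition is_TJ_graph (k : nat) (T : sgraph) : Prop :=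
  exists G : sgraph, iso_TJ k T G.

Definition is_max_TJ_graph (k : nat) (T : sgraph) : Prop :=
  exists G : sgraph, clique_number G = k /\ iso_TJ k T G.

Definition has_induced_diamond (T : sgraph) : Prop :=
  exists a b c d : vtx T,
    [/\ uniq [:: a; b; c; d],
        [&& @adj T a b, @adj T a c, @adj T a d, @adj T b c & @adj T b d]
      & ~~ @adj T c d].

(* For k = 1 every TJ_1-graph is complete, hence the TJ_1-graph of an edgeless graph.
   For k = 2, 3 let TJ_k(G) be diamond-free. A k-clique meeting a (k+1)-clique K in k - 1
   vertices then lies inside K, since otherwise it forms a diamond with three k-subsets of K.
   Hence a k-clique lies in at most one (k+1)-clique, and, as k - 1 <= 2, it lies in every
   (k+1)-clique containing two of its vertices.
   Now delete from G the edges lying in (k+1)-cliques, and replace each (k+1)-clique K by a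
   book: a new (k-1)-clique, the spine of K, and a new page vertex for each k-subset X of K,
   joined to the whole spine. Sending a k-clique X inside some K to the spine of K plus the
   page X, and every other k-clique to itself, is a bijection between k-cliques preserving
   TJ-adjacency. Every clique of the new graph lies in a book, in a spine or among the
   remaining edges of G, which contain no (k+1)-clique; so it has at most k vertices. *)

From HB Require Import structures.
From mathcomp Require Import all_boot zify.
Set Implicit Arguments. Unset Strict Implicit. Unset Printing Implicit Defensive.

Section FinsetCards.
Variable T : finType.
Implicit Types A B X Y K : {set T}.

Lemma card_setD1I A B u : #|(A :\ u) :&: B| = #|A :&: B| - (u \in A :&: B).
Proof. by rewrite setIDAC (cardsD1 u (A :&: B)) addKn. Qed.

Lemma card_setD1_pair A u v :
  u \in A -> v \in A -> u != v -> #|(A :\ u) :&: (A :\ v)| = #|A| - 2.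
Proof.
move=> uA vA uv; rewrite card_setD1I (setIidPr (subD1set A v)) !inE uv uA.
by rewrite (cardsD1 v A) vA; lia.
Qed.

Lemma card_setI_subsets_succ X Y K n : #|X| = n -> #|Y| = n -> #|K| = n.+1 ->
  X \subset K -> Y \subset K -> X != Y -> #|X :&: Y| = n.-1.
Proof.
move=> cardX cardY cardK XK YK XY.
have XY_lt : #|X :&: Y| < n.
  rewrite ltn_neqAle -{2}cardX subset_leq_card ?subsetIl // andbT.
  apply: contra XY => /eqP XYn.
  have XYX : X :&: Y == X by rewrite eqEcard subsetIl XYn cardX leqnn.
  have XsubY : X \subset Y by rewrite -(eqP XYX) subsetIr.
  by rewrite eqEcard XsubY cardX cardY leqnn.
have := cardsUI X Y; have : #|X :|: Y| <= #|K| by rewrite subset_leq_card // subUset XK.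
lia.
Qed.

End FinsetCards.

Section Cliques.
Variable G : sgraph.
Implicit Types (x y : vtx G) (X Y K : {set vtx G}).

Definition kclique k X := is_clique X && (#|X| == k).

Lemma is_cliqueP X : reflect {in X &, forall x y, x != y -> adj x y} (is_clique X).
Proof.
apply: (iffP forall_inP) => [cX x y xX yX xy | cX x xX].
  by move/forall_inP/(_ y yX)/implyP: (cX x xX); apply.
by apply/forall_inP => y yX; apply/implyP; apply: cX.
Qed.

Lemma clique_subset X Y : is_clique Y -> X \subset Y -> is_clique X.
Proof.
move=> /is_cliqueP cY /subsetP sXY; apply/is_cliqueP => x y xX yX; apply: cY; exact: sXY.
Qed.

Lemma card_le1_clique X : #|X| <= 1 -> is_clique X.
Proof.
move=> X_le1; apply/is_cliqueP => x y xX yX xy.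
suff: 1 < #|X| by rewrite ltnNge X_le1.
by apply/card_gt1P; exists x, y.
Qed.

Lemma kclique_subset n m X K : kclique m K -> X \subset K -> #|X| = n -> kclique n X.
Proof. by case/andP=> cK _ XK cardX; rewrite /kclique (clique_subset cK XK) cardX eqxx. Qed.

Lemma kclique_setD1 k K u : kclique k.+1 K -> u \in K -> kclique k (K :\ u).
Proof.
case/andP=> cK /eqP cardK uK; rewrite /kclique (clique_subset cK (subD1set K u)) /=.
by move: (cardsD1 u K); rewrite uK cardK add1n => -[<-].
Qed.

Lemma clique_number_eq n : (forall X, is_clique X -> #|X| <= n) ->
  (exists X, kclique n X) -> clique_number G = n.
Proof.
move=> small_cliques [X /andP[cX /eqP cardX]]; apply/anti_leq/andP; split.
  by apply/bigmax_leqP => Y; apply: small_cliques.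
by rewrite -cardX; apply: (leq_bigmax_cond _ cX).
Qed.

Lemma tj_adjE k (X Y : tj_vertex G k) :
  0 < k -> tj_adj X Y = (#|val X :&: val Y| == k.-1).
Proof.
move=> k_gt0; case/andP: (valP X) => _ /eqP cardX; case/andP: (valP Y) => _ /eqP cardY.
have := subset_leq_card (subsetIl (val X) (val Y)).
rewrite /tj_adj !cardsD cardX cardY [val Y :&: _]setIC => meet_le.
by apply/andP/eqP => [[/eqP ? _]|?]; [lia | split; apply/eqP; lia].
Qed.

End Cliques.

Lemma iso_TJ_transfer k (T G H : sgraph) (phi : {set vtx G} -> {set vtx H}) :
  0 < k ->
  (forall X, kclique k X -> kclique k (phi X)) ->
  (forall X Y, kclique k X -> kclique k Y -> phi X = phi Y -> X = Y) ->
  (forall Y, kclique k Y -> exists2 X, kclique k X & phi X = Y) ->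
  (forall X Y, kclique k X -> kclique k Y ->
     (#|phi X :&: phi Y| == k.-1) = (#|X :&: Y| == k.-1)) ->
  iso_TJ k T G -> iso_TJ k T H.
Proof.
move=> k_gt0 phi_kclique phi_inj phi_onto phi_meet [f [f_bij f_adj]].
pose g (X : tj_vertex G k) : tj_vertex H k := exist _ (phi (val X)) (phi_kclique _ (valP X)).
have g_onto (Y : tj_vertex H k) : exists X, g X == Y.
  have [X kX phiX] := phi_onto _ (valP Y).
  by exists (exist _ X kX); apply/eqP/val_inj.
have g_bij : bijective g.
  exists (fun Y => xchoose (g_onto Y)) => [X|Y]; last exact/eqP/(xchooseP (g_onto Y)).
  have /eqP/(congr1 val) := xchooseP (g_onto (g X)).
  by move/phi_inj => /(_ (valP _) (valP X)) /val_inj.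
exists (g \o f); split; first exact: bij_comp.
by move=> x y; rewrite f_adj /= !tj_adjE // phi_meet //; apply: valP.
Qed.

(* [#|C :&: D| < k.-1] says that C and D are distinct and non-adjacent in TJ_k(G). *)
Definition tj_diamond_free (G : sgraph) k := forall A B C D : {set vtx G},
  kclique k A -> kclique k B -> kclique k C -> kclique k D ->
  #|A :&: B| = k.-1 -> #|A :&: C| = k.-1 -> #|A :&: D| = k.-1 ->
  #|B :&: C| = k.-1 -> #|B :&: D| = k.-1 -> #|C :&: D| < k.-1 -> False.

Lemma diamond_free_of_iso k (T G : sgraph) :
  0 < k -> iso_TJ k T G -> ~ has_induced_diamond T -> tj_diamond_free G k.
Proof.
move=> k_gt0 [f [[g fK gK] f_adj]] noD A B C D kA kB kC kD AB AC AD BC BD CD.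
pose v X (kX : kclique k X) := g (exist _ X kX : tj_vertex G k).
have adjE X Y kX kY : adj (v X kX) (v Y kY) = (#|X :&: Y| == k.-1).
  by rewrite f_adj !gK tj_adjE.
have adj_neq (a b : vtx T) : adj a b -> a != b.
  by apply: contraTneq => ->; rewrite adj_irr.
have CneD : v C kC != v D kD.
  apply: contraTneq CD => /(congr1 (val \o f)); rewrite /= !gK /= => <-.
  by rewrite setIid; case/andP: kC => _ /eqP->; rewrite -leqNgt leq_pred.
apply: noD; exists (v A kA), (v B kB), (v C kC), (v D kD).
rewrite /= !inE !negb_or CneD !adj_neq ?adjE ?AB ?AC ?AD ?BC ?BD ?eqxx //.
by split=> //; rewrite ltn_eqF.
Qed.

Section DiamondFree.
Variables (G : sgraph) (k : nat).
Hypotheses (k_gt1 : 1 < k) (k_le3 : k <= 3) (diamond_free : tj_diamond_free G k).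
Local Notation V := (vtx G).
Implicit Types (x y : V) (C D K X Y : {set V}).

(* Otherwise K :&: C has k - 1 vertices, K :\: C = {p, q}, and for w in K :&: C the
   k-cliques K :\ q, K :\ p, K :\ w and C form a diamond in TJ_k(G). *)
Lemma kclique_subset_meet C K :
  kclique k C -> kclique k.+1 K -> k.-1 <= #|K :&: C| -> C \subset K.
Proof.
move=> kC kK meet_ge; have /andP[_ /eqP cardC] := kC; have /andP[_ /eqP cardK] := kK.
apply: contraT => notCK; set M := K :&: C in meet_ge *.
have cardM : #|M| = k.-1.
  suff : #|M| < k by lia.
  rewrite ltn_neqAle -{2}cardC subset_leq_card ?subsetIr // andbT.
  apply: contra notCK => /eqP cardM.
  have MC : M == C by rewrite eqEcard subsetIr cardM cardC leqnn.
  by rewrite -(eqP MC) subsetIl.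
have /cards2P[p [q [pq KM]]] : #|K :\: M| == 2.
  by rewrite cardsD (setIidPr (subsetIl K C)) cardK cardM; apply/eqP; lia.
have /setDP[pK pM] : p \in K :\: M by rewrite KM set21.
have /setDP[qK qM] : q \in K :\: M by rewrite KM set22.
have /card_gt0P[w wM] : 0 < #|M| by rewrite cardM; lia.
have /setIP[wK _] := wM.
have pw : p != w by apply: contraNneq pM => ->.
have qw : q != w by apply: contraNneq qM => ->.
have meetD1 u : #|(K :\ u) :&: C| = k.-1 - (u \in M) by rewrite card_setD1I cardM.
have pairD1 u u' : u \in K -> u' \in K -> u != u' -> #|(K :\ u) :&: (K :\ u')| = k.-1.
  by move=> uK u'K uu'; rewrite card_setD1_pair // cardK subSS subn1.
exfalso; apply: (diamond_free (kclique_setD1 kK qK) (kclique_setD1 kK pK) (kclique_setD1 kK wK) kC).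
- by rewrite pairD1 // eq_sym.
- exact: pairD1.
- by rewrite meetD1 (negbTE qM) subn0.
- exact: pairD1.
- by rewrite meetD1 (negbTE pM) subn0.
- by rewrite meetD1 wM subn1 ltn_predL ltn_predRL.
Qed.

Lemma kclique_ext_unique C K K' : kclique k C -> kclique k.+1 K -> kclique k.+1 K' ->
  C \subset K -> C \subset K' -> K = K'.
Proof.
move=> kC kK kK' CK CK'; have /andP[_ /eqP cardC] := kC.
have /andP[_ /eqP cardK] := kK; have /andP[_ /eqP cardK'] := kK'.
have /card_gt0P[w wC] : 0 < #|C| by rewrite cardC; lia.
have wK' := subsetP CK' w wC.
have K'wK : K' :\ w \subset K.
  apply: kclique_subset_meet (kclique_setD1 kK' wK') kK _.
  have : C :\ w \subset K :&: (K' :\ w).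
    by rewrite subsetI (subset_trans (subD1set C w) CK) setSD.
  by move/subset_leq_card; have := cardsD1 w C; rewrite wC cardC; lia.
have K'K : K' \subset K.
  by rewrite -(setD1K wK') subUset sub1set (subsetP CK w wC) K'wK.
by apply/esym/eqP; rewrite eqEcard K'K cardK cardK' leqnn.
Qed.

Lemma tj_adj_subset C D K : kclique k C -> kclique k D -> kclique k.+1 K ->
  C \subset K -> #|C :&: D| = k.-1 -> D \subset K.
Proof.
move=> kC kD kK CK CD; apply: kclique_subset_meet => //.
by rewrite -CD subset_leq_card // setSI.
Qed.

Lemma kclique_subset_pair C K x y : kclique k C -> kclique k.+1 K ->
  x \in C -> y \in C -> x != y -> x \in K -> y \in K -> C \subset K.
Proof.
move=> kC kK xC yC xy xK yK; apply: kclique_subset_meet => //.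
have : [set x; y] \subset K :&: C by rewrite subUset !sub1set !inE xK yK xC yC.
by move/subset_leq_card; rewrite cards2 xy; lia.
Qed.

Definition succ_clique_edge x y := [exists K, [&& kclique k.+1 K, x \in K & y \in K]].

Definition thin_adj x y := adj x y && ~~ succ_clique_edge x y.

Lemma thin_adj_sym : symmetric thin_adj.
Proof.
move=> x y; rewrite /thin_adj adj_sym; congr (_ && ~~ _).
by apply: eq_existsb => K; rewrite (andbC (x \in K)).
Qed.

Lemma thin_adj_irr : irreflexive thin_adj.
Proof. by move=> x; rewrite /thin_adj adj_irr. Qed.

Definition thin_graph := SGraph thin_adj_sym thin_adj_irr.

Inductive book_vtx := Plain of V | Page of {set V} | Spine of {set V} & 'I_k.-1.

Definition book_vtx_code (u : book_vtx) :=
  match u with Plain x => inl (inl x) | Page X => inl (inr X) | Spine K i => inr (K, i) end.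

Definition book_vtx_decode (c : (V + {set V}) + ({set V} * 'I_k.-1)) :=
  match c with inl (inl x) => Plain x | inl (inr X) => Page X | inr (K, i) => Spine K i end.

Lemma book_vtx_codeK : cancel book_vtx_code book_vtx_decode.
Proof. by case. Qed.

HB.instance Definition _ := Finite.copy book_vtx (can_type book_vtx_codeK).

Definition book_adj (u v : book_vtx) : bool :=
  match u, v with
  | Plain x, Plain y => thin_adj x y
  | Page X, Spine K _ | Spine K _, Page X => [&& kclique k.+1 K, X \subset K & #|X| == k]
  | Spine K i, Spine K' j => [&& K == K', i != j & kclique k.+1 K]
  | _, _ => false
  end.

Lemma book_adj_sym : symmetric book_adj.
Proof.
move=> [x|X|K i] [y|Y|K' j] //=; first exact: thin_adj_sym.
by rewrite eq_sym; case: eqP => //= ->; rewrite eq_sym.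
Qed.

Lemma book_adj_irr : irreflexive book_adj.
Proof. by move=> [x|X|K i] /=; rewrite ?thin_adj_irr ?eqxx ?andbF. Qed.

Definition book_graph := SGraph book_adj_sym book_adj_irr.
Local Notation W := (vtx book_graph).
Implicit Types (S : {set W}) (u v : W).

Definition plain X : {set W} := [set u | if u is Plain x then x \in X else false].
Definition spine K : {set W} := [set u | if u is Spine K' _ then K' == K else false].
Definition book K X : {set W} :=
  [set u | match u with Plain _ => false | Page Y => Y == X | Spine K' _ => K' == K end].

Definition kclique_ext X := [pick K | kclique k.+1 K & X \subset K].

Definition book_image X := if kclique_ext X is Some K then book K X else plain X.

Lemma kclique_ext_some X K : kclique_ext X = Some K -> kclique k.+1 K /\ X \subset K.
Proof. by rewrite /kclique_ext; case: pickP => // K' /andP[kK' XK'] [<-]. Qed.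

Lemma kclique_ext_none X K : kclique_ext X = None -> kclique k.+1 K -> ~~ (X \subset K).
Proof.
by rewrite /kclique_ext; case: pickP => // noK _ kK; move/(_ K): noK; rewrite kK => /negbT.
Qed.

Lemma kclique_ext_eq X K :
  kclique k X -> kclique k.+1 K -> X \subset K -> kclique_ext X = Some K.
Proof.
move=> kX kK XK; case extX: (kclique_ext X) => [K'|].
  by have [kK' XK'] := kclique_ext_some extX; rewrite (kclique_ext_unique kX kK' kK).
by have := kclique_ext_none extX kK; rewrite XK.
Qed.

Lemma card_plain X : #|plain X| = #|X|.
Proof.
have -> : plain X = Plain @: X.
  apply/setP => -[x|Y|K i]; rewrite inE; try by apply/esym/negbTE/negP => /imsetP[].
  by rewrite mem_imset // => ? ? [].
by apply: card_imset => ? ? [].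
Qed.

Lemma card_spine K : #|spine K| = k.-1.
Proof.
have -> : spine K = Spine K @: setT.
  apply/setP => -[x|Y|K' i]; rewrite inE; try by apply/esym/negbTE/negP => /imsetP[].
  by apply/eqP/imsetP => [-> | [j _ [->]]]; first exists i.
by rewrite card_imset ?cardsT ?card_ord // => ? ? [].
Qed.

Lemma card_book K X : #|book K X| = k.
Proof.
have -> : book K X = Page X |: spine K.
  by apply/setP => -[x|Y|K' i]; rewrite !inE ?orbF //=; apply/eqP/eqP => [->|[]].
by rewrite cardsU1 card_spine inE add1n prednK ?(ltnW k_gt1).
Qed.

Lemma plain_cliqueE X : @is_clique book_graph (plain X) = @is_clique thin_graph X.
Proof.
apply/is_cliqueP/is_cliqueP => cX.
  by move=> x y xX yX xy; apply: (cX (Plain x) (Plain y)); rewrite ?inE.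
by move=> [x|Y|K i] [y|Y'|K' j]; rewrite !inE // => xX yX xy; apply: cX.
Qed.

Lemma book_is_clique K X :
  kclique k.+1 K -> X \subset K -> #|X| = k -> @is_clique book_graph (book K X).
Proof.
move=> kK XK cardX; apply/is_cliqueP => -[x|Y|K1 i] [y|Y'|K2 j]; rewrite !inE //=.
- by move=> /eqP-> /eqP->; rewrite eqxx.
- by move=> /eqP-> /eqP-> _; rewrite kK XK cardX eqxx.
- by move=> /eqP-> /eqP-> _; rewrite kK XK cardX eqxx.
- move=> /eqP-> /eqP-> ij; rewrite eqxx kK andbT.
  by apply: contra ij => /eqP->.
Qed.

Lemma thin_clique_card X : @is_clique thin_graph X -> #|X| <= k.
Proof.
move=> /is_cliqueP cX; rewrite leqNgt; apply/negP => /card_geqP[s [s_uniq s_size sX]].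
pose K := [set x in s].
have cardK : #|K| = k.+1 by rewrite cardsE (card_uniqP s_uniq) s_size.
have kK : kclique k.+1 K.
  rewrite /kclique cardK eqxx andbT; apply/is_cliqueP => x y; rewrite !inE => xs ys xy.
  by case/andP: (cX x y (sX x xs) (sX y ys) xy).
have /card_gt1P[x [y [xK yK xy]]] : 1 < #|K| by rewrite cardK ltnS ltnW.
move: (xK) (yK); rewrite !inE => /sX xX /sX yX.
case/andP: (cX x y xX yX xy) => _ /negP; apply; apply/existsP; exists K.
by rewrite kK xK yK.
Qed.

Lemma thin_cliqueE X :
  #|X| = k -> @is_clique thin_graph X = is_clique X && (kclique_ext X == None).
Proof.
move=> cardX; apply/idP/andP => [/is_cliqueP cX | [cX /eqP extX]].
  split; first by apply/is_cliqueP => x y xX yX xy; case/andP: (cX x y xX yX xy).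
  case extX: (kclique_ext X) => [K|//]; have [kK XK] := kclique_ext_some extX.
  have /card_gt1P[x [y [xX yX xy]]] : 1 < #|X| by rewrite cardX.
  suff : succ_clique_edge x y by case/andP: (cX x y xX yX xy) => _ /negP.
  by apply/existsP; exists K; rewrite kK !(subsetP XK).
have kX : kclique k X by rewrite /kclique cX cardX eqxx.
apply/is_cliqueP => x y xX yX xy; rewrite /= /thin_adj (is_cliqueP _ cX) //=.
apply/existsP => -[K /and3P[kK xK yK]].
by have := kclique_ext_none extX kK; rewrite (kclique_subset_pair kX kK xX yX xy xK yK).
Qed.

Lemma book_image_kclique X : kclique k X -> @kclique book_graph k (book_image X).
Proof.
move=> kX; have /andP[cX /eqP cardX] := kX; rewrite /kclique /book_image.
case extX: (kclique_ext X) => [K|].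
  have [kK XK] := kclique_ext_some extX.
  by rewrite book_is_clique // card_book eqxx.
by rewrite plain_cliqueE thin_cliqueE // cX extX card_plain cardX eqxx.
Qed.

Lemma book_image_inj : injective book_image.
Proof.
move=> X Y; rewrite /book_image.
case: (kclique_ext X) => [K|]; case: (kclique_ext Y) => [K'|] /setP eXY.
- by have := eXY (Page X); rewrite !inE eqxx => /esym/eqP.
- by have := eXY (Page X); rewrite !inE eqxx.
- by have := eXY (Page Y); rewrite !inE eqxx.
- by apply/setP => x; have := eXY (Plain x); rewrite !inE.
Qed.

Lemma book_image_meet_ext X Y K : kclique k X -> kclique k Y -> kclique_ext X = Some K ->
  (#|book_image X :&: book_image Y| == k.-1) = (#|X :&: Y| == k.-1).
Proof.
move=> kX kY extX; have [kK XK] := kclique_ext_some extX.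
have /andP[_ /eqP cardX] := kX; have /andP[_ /eqP cardY] := kY.
have not_tj_adj : kclique_ext Y != Some K -> (0 == k.-1) = (#|X :&: Y| == k.-1).
  move=> extY; rewrite eq_sym eqn0Ngt ltn_predRL k_gt1; apply/esym/negP => /eqP XY.
  by move: extY; rewrite (kclique_ext_eq kY kK (tj_adj_subset kX kY kK XK XY)) eqxx.
rewrite /book_image extX; case extY: (kclique_ext Y) => [K'|]; last first.
  have -> : book K X :&: plain Y = set0 by apply/setP => -[x|Z|K' i]; rewrite !inE ?andbF.
  by rewrite cards0 not_tj_adj ?extY.
have [kK' YK'] := kclique_ext_some extY.
have [XeqY|XY] := eqVneq X Y.
  by move: extY; rewrite -XeqY extX => -[<-]; rewrite !setIid card_book cardX.
have [KeqK'|KK'] := eqVneq K K'; first subst K'.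
  have -> : book K X :&: book K Y = spine K.
    apply/setP => -[x|Z|K'' i]; rewrite !inE ?andbb //.
    by apply/negbTE; apply: contra XY => /andP[/eqP<- /eqP<-].
  have /andP[_ /eqP cardK] := kK.
  by rewrite card_spine eqxx (card_setI_subsets_succ cardX cardY cardK XK YK' XY) eqxx.
have -> : book K X :&: book K' Y = set0.
  apply/setP => -[x|Z|K'' i]; rewrite !inE //; apply/negbTE.
    by apply: contra XY => /andP[/eqP<- /eqP<-].
  by apply: contra KK' => /andP[/eqP<- /eqP<-].
by rewrite cards0 not_tj_adj // extY; apply: contra KK' => /eqP[->].
Qed.

Lemma book_image_meet X Y : kclique k X -> kclique k Y ->
  (#|book_image X :&: book_image Y| == k.-1) = (#|X :&: Y| == k.-1).
Proof.
move=> kX kY; case extX: (kclique_ext X) => [K|]; first exact: book_image_meet_ext extX.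
case extY: (kclique_ext Y) => [K|].
  by rewrite setIC [X :&: Y]setIC (book_image_meet_ext kY kX extY).
have -> : book_image X :&: book_image Y = plain (X :&: Y).
  by rewrite /book_image extX extY; apply/setP => -[x|Z|K i]; rewrite !inE.
by rewrite card_plain.
Qed.

Lemma page_clique_subset_book S X u : @is_clique book_graph S ->
  Page X \in S -> u \in S -> u != Page X ->
  exists K, [/\ kclique k.+1 K, X \subset K, #|X| = k & S \subset book K X].
Proof.
move=> /is_cliqueP cS XS uS uX.
have adjX v : v \in S -> v != Page X ->
    if v is Spine K _ then [&& kclique k.+1 K, X \subset K & #|X| == k] else false.
  by move=> vS vX; have := cS _ _ vS XS vX; case: v {vS vX}.
move: (adjX u uS uX); case: u {uS uX} => // K i /and3P[kK XK /eqP cardX].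
have kX := kclique_subset kK XK cardX.
exists K; split=> //; apply/subsetP => v vS; rewrite inE.
have [->|vX] := eqVneq v (Page X); first by rewrite /= eqxx.
move: (adjX v vS vX); case: v {vS vX} => // K' j /and3P[kK' XK' _].
by apply/eqP; apply: kclique_ext_unique kX kK' kK XK' XK.
Qed.

Lemma spine_clique_subset S K i : @is_clique book_graph S ->
  Spine K i \in S -> (forall X, Page X \notin S) -> S \subset spine K.
Proof.
move=> /is_cliqueP cS KS noPage; apply/subsetP => v vS; rewrite inE.
have [->|vK] := eqVneq v (Spine K i); first by rewrite /= eqxx.
have := cS _ _ vS KS vK; case: v vS {vK} => [x|X|K' j] //= vS.
  by rewrite (negbTE (noPage X)) in vS.
by case/and3P.
Qed.

Lemma plain_clique S : @is_clique book_graph S ->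
  (forall X, Page X \notin S) -> (forall K i, Spine K i \notin S) ->
  exists2 S0, S = plain S0 & @is_clique thin_graph S0.
Proof.
move=> cS noPage noSpine; have eS : S = plain [set x | Plain x \in S].
  apply/setP => -[x|X|K i]; rewrite !inE //.
    exact: negbTE (noPage X).
  exact: negbTE (noSpine K i).
by exists [set x | Plain x \in S]; rewrite // -plain_cliqueE -eS.
Qed.

Lemma book_clique_cases S : @is_clique book_graph S -> 1 < #|S| ->
  [\/ exists K X, [/\ kclique k.+1 K, X \subset K, #|X| = k & S \subset book K X],
      exists K, S \subset spine K
    | exists2 S0, S = plain S0 & @is_clique thin_graph S0].
Proof.
move=> cS /card_gt1P[u [v [uS vS uv]]].
case: (pickP (fun X => Page X \in S)) => [X XS | noPage].
  have [w wS wX] : exists2 w, w \in S & w != Page X.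
    by have [uX|] := eqVneq u (Page X); [exists v; rewrite // -uX eq_sym | exists u].
  by apply: Or31; have [K ?] := page_clique_subset_book cS XS wS wX; exists K, X.
have {}noPage X : Page X \notin S by rewrite noPage.
case: (pickP (fun Ki : {set V} * 'I_k.-1 => Spine Ki.1 Ki.2 \in S)) => [[K i] KS | noSpine].
  by apply: Or32; exists K; apply: spine_clique_subset cS KS noPage.
by apply: Or33; apply: plain_clique cS noPage (fun K i => negbT (noSpine (K, i))).
Qed.

Lemma book_graph_clique_le S : @is_clique book_graph S -> #|S| <= k.
Proof.
move=> cS; have [S_le1|/(book_clique_cases cS)[]] := leqP #|S| 1.
- exact: leq_trans S_le1 (ltnW k_gt1).
- by case=> K [X [_ _ _ /subset_leq_card]]; rewrite card_book.
- by case=> K /subset_leq_card; rewrite card_spine => /leq_trans; apply; apply: leq_pred.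
- by case=> S0 -> /thin_clique_card; rewrite card_plain.
Qed.

Lemma book_graph_kclique_image S :
  @kclique book_graph k S -> exists2 X, kclique k X & book_image X = S.
Proof.
case/andP=> cS /eqP cardS; have : 1 < #|S| by rewrite cardS.
case/(book_clique_cases cS) => [[K [X [kK XK cardX SKX]]]|[K SK]|[S0 eS cS0]].
- have kX := kclique_subset kK XK cardX.
  exists X => //; rewrite /book_image (kclique_ext_eq kX kK XK).
  by apply/esym/eqP; rewrite eqEcard SKX card_book cardS leqnn.
- by have := subset_leq_card SK; rewrite card_spine cardS ltn_geF ?ltn_predL ?(ltnW k_gt1).
- have cardS0 : #|S0| = k by rewrite -card_plain -eS.
  move: cS0; rewrite thin_cliqueE // => /andP[cS0 /eqP extS0].
  by exists S0; rewrite /kclique ?cS0 ?cardS0 ?eqxx // /book_image extS0.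
Qed.

Lemma clique_number_book_graph : (exists X, kclique k X) -> clique_number book_graph = k.
Proof.
case=> X kX; apply: clique_number_eq; first exact: book_graph_clique_le.
by exists (book_image X); apply: book_image_kclique.
Qed.

Lemma iso_TJ_book_graph T : iso_TJ k T G -> iso_TJ k T book_graph.
Proof.
apply: (iso_TJ_transfer (phi := book_image)) => //.
- exact: ltnW k_gt1.
- exact: book_image_kclique.
- by move=> X Y _ _ /book_image_inj.
- exact: book_graph_kclique_image.
- exact: book_image_meet.
Qed.

End DiamondFree.

Definition edgeless (V : finType) : sgraph :=
  @SGraph V (fun _ _ => false) (fun _ _ => erefl) (fun _ => erefl).

Lemma kclique1 (G : sgraph) (X : {set vtx G}) : kclique 1 X = (#|X| == 1).
Proof. by rewrite /kclique andb_idl // => /eqP/eq_leq/card_le1_clique. Qed.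

Lemma clique_number_edgeless (V : finType) (X : {set V}) :
  #|X| = 1 -> clique_number (edgeless V) = 1.
Proof.
move=> cardX; apply: clique_number_eq => [C /is_cliqueP cC|].
  by rewrite leqNgt; apply/negP => /card_gt1P[x [y [xC yC /(cC x y xC yC)]]].
by exists X; rewrite kclique1 cardX.
Qed.

Lemma iso_TJ_edgeless (T G : sgraph) : iso_TJ 1 T G -> iso_TJ 1 T (edgeless (vtx G)).
Proof.
apply: (@iso_TJ_transfer 1 T G (edgeless (vtx G)) id) => //.
- by move=> X; rewrite !kclique1.
- by move=> Y kY; exists Y; rewrite // kclique1 -(@kclique1 (edgeless (vtx G))).
Qed.

Theorem proposition4p15 (k : nat) (T : sgraph) :
  1 <= k <= 3 ->
  0 < #|vtx T| ->
  is_TJ_graph k T ->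
  ~ has_induced_diamond T ->
  is_max_TJ_graph k T.
Proof.
move=> /andP[k_gt0 k_le3] /card_gt0P[t _] [G isoTG] noD.
have kC : exists C : {set vtx G}, kclique k C.
  by case: isoTG => f _; exists (val (f t)); apply: valP.
have [k1|k_neq1] := eqVneq k 1.
  subst k; case: kC => C /andP[_ /eqP cardC].
  exists (edgeless (vtx G)); split; first exact: clique_number_edgeless cardC.
  exact: iso_TJ_edgeless.
have k_gt1 : 1 < k by rewrite ltn_neqAle eq_sym k_neq1.
have dfree := diamond_free_of_iso k_gt0 isoTG noD.
exists (book_graph G k); split; first exact: clique_number_book_graph k_gt1 k_le3 dfree kC.
exact: (iso_TJ_book_graph k_gt1 k_le3 dfree isoTG).
Qed.
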